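(* Let $\sigma(x)=1/(1+e^{-x})$, let $k\in\mathbb{N}$ and let $t_\sigma\in\mathbb{R}$ with $\sigma^{(k)}(t_\sigma)\ne0$. Then for every $N\in\mathbb{N}$ with $N>k$ there exist $\alpha_j,\beta_j\in\mathbb{R}$ ($j=0,\dots,N-1$) and a constant $c_{54}\ge0$ such that $$f_{net,x^k}(x)=\frac{k!}{\sigma^{(k)}(t_\sigma)}\sum_{j=0}^{N-1}\alpha_j\,\sigma(\beta_jx+t_\sigma)$$ satisfies, for all $A>0$ and all $x\in[-A,A]$, $|f_{net,x^k}(x)-x^k|\le c_{54}A^N$.
   Context: $\sigma^{(k)}$ denotes the $k$-th derivative of $\sigma$. *)

From Stdlib Require Import Reals Factorial.
From Coquelicot Require Import Coquelicot.
Open Scope R_scope.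

Definition logistic (x : R) : R := / (1 + exp (- x)).

Definition f_net (k N : nat) (t : R) (alpha beta : nat -> R) (x : R) : R :=
  INR (fact k) / Derive_n logistic k t *
  sum_f_R0 (fun j => alpha j * logistic (beta j * x + t)) (N - 1).

From Stdlib Require Import Reals Factorial Lra Lia.
From Coquelicot Require Import Coquelicot.
Open Scope R_scope.

(* Taylor-expand each neuron σ(β_j x + t) around t to order N - 1.  Since
   σ' = σ(1 - σ), every derivative of σ is a polynomial in σ, hence bounded,
   so the remainder is O(|β_j x|^N).  With nodes β_j = 2^j, weights α_j with
   Σ_j α_j β_j^m = δ_{mk} for m < N cancel every Taylor term but the k-th,
   which is x^k σ^(k)(t) / k!.  Such weights exist because (2^j)^m = (2^m)^j
   turns these moment conditions into the interpolation conditions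
   p(2^m) = δ_{mk} for the polynomial p(z) = Σ_j α_j z^j, which are met by a
   Lagrange basis polynomial. *)

Inductive sig_poly := SConst (r : R) | SVar | SAdd (p q : sig_poly) | SMul (p q : sig_poly).

Fixpoint sig_poly_eval (s : R -> R) (p : sig_poly) (x : R) : R :=
  match p with
  | SConst r => r
  | SVar => s x
  | SAdd p q => sig_poly_eval s p x + sig_poly_eval s q x
  | SMul p q => sig_poly_eval s p x * sig_poly_eval s q x
  end.

Fixpoint sig_poly_deriv (p : sig_poly) : sig_poly :=
  match p with
  | SConst _ => SConst 0
  | SVar => SMul SVar (SAdd (SConst 1) (SMul (SConst (-1)) SVar))
  | SAdd p q => SAdd (sig_poly_deriv p) (sig_poly_deriv q)
  | SMul p q => SAdd (SMul (sig_poly_deriv p) q) (SMul p (sig_poly_deriv q))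
  end.

Fixpoint sig_poly_bound (p : sig_poly) : R :=
  match p with
  | SConst r => Rabs r
  | SVar => 1
  | SAdd p q => sig_poly_bound p + sig_poly_bound q
  | SMul p q => sig_poly_bound p * sig_poly_bound q
  end.

Fixpoint sig_poly_iter_deriv (m : nat) : sig_poly :=
  match m with O => SVar | S m => sig_poly_deriv (sig_poly_iter_deriv m) end.

Section BoundedLogisticSolution.

Variable s : R -> R.
Hypothesis s_derive : forall x, is_derive s x (s x * (1 - s x)).
Hypothesis s_bounded : forall x, Rabs (s x) <= 1.

Lemma sig_poly_eval_derive p x :
  is_derive (sig_poly_eval s p) x (sig_poly_eval s (sig_poly_deriv p) x).
Proof.
  induction p as [r| |p IHp q IHq|p IHp q IHq]; simpl.
  - exact (is_derive_const r x).
  - replace (s x * (1 + -1 * s x)) with (s x * (1 - s x)) by ring.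
    apply s_derive.
  - apply (is_derive_plus (sig_poly_eval s p) (sig_poly_eval s q)); assumption.
  - apply (is_derive_mult (sig_poly_eval s p) (sig_poly_eval s q)); auto.
    intros; apply Rmult_comm.
Qed.

Lemma sig_poly_eval_bound p x : Rabs (sig_poly_eval s p x) <= sig_poly_bound p.
Proof.
  induction p as [r| |p IHp q IHq|p IHp q IHq]; simpl.
  - lra.
  - apply s_bounded.
  - eapply Rle_trans; [apply Rabs_triang | lra].
  - rewrite Rabs_mult. apply Rmult_le_compat; auto; apply Rabs_pos.
Qed.

Lemma Derive_n_sig_poly m x : Derive_n s m x = sig_poly_eval s (sig_poly_iter_deriv m) x.
Proof.
  revert x; induction m as [|m IHm]; intros x; simpl; [reflexivity|].
  rewrite (Derive_ext _ (sig_poly_eval s (sig_poly_iter_deriv m))) by auto.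
  apply is_derive_unique, sig_poly_eval_derive.
Qed.

Lemma ex_derive_n_logistic_solution m x : ex_derive_n s m x.
Proof.
  destruct m as [|m]; simpl; [exact I|].
  apply (ex_derive_ext (sig_poly_eval s (sig_poly_iter_deriv m))).
  - intros; symmetry; apply Derive_n_sig_poly.
  - eexists; apply sig_poly_eval_derive.
Qed.

Lemma Derive_n_logistic_solution_bounded m :
  exists M, forall x, Rabs (Derive_n s m x) <= M.
Proof.
  exists (sig_poly_bound (sig_poly_iter_deriv m)); intros x.
  rewrite Derive_n_sig_poly; apply sig_poly_eval_bound.
Qed.

End BoundedLogisticSolution.

Lemma logistic_derive x : is_derive logistic x (logistic x * (1 - logistic x)).
Proof.
  unfold logistic.
  assert (H : 0 < exp (- x)) by apply exp_pos.
  auto_derive; [lra | field; lra].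
Qed.

Lemma logistic_bounded x : Rabs (logistic x) <= 1.
Proof.
  unfold logistic. assert (H : 0 < exp (- x)) by apply exp_pos.
  rewrite Rabs_pos_eq.
  - rewrite <- Rinv_1. apply Rinv_le_contravar; lra.
  - left. apply Rinv_0_lt_compat. lra.
Qed.

Definition taylor_poly (f : R -> R) (n : nat) (t y : R) : R :=
  sum_f_R0 (fun m => y ^ m / INR (fact m) * Derive_n f m t) n.

Lemma taylor_poly_0 f n t : taylor_poly f n t 0 = f t.
Proof.
  unfold taylor_poly; induction n as [|n IHn]; simpl; [field|].
  rewrite IHn; unfold Rdiv; ring.
Qed.

Lemma taylor_poly_opp f n t y :
  (forall m x, ex_derive_n f m x) ->
  taylor_poly (fun u => f (- u)) n (- t) (- y) = taylor_poly f n t y.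
Proof.
  intros f_smooth; unfold taylor_poly; apply sum_eq; intros m _.
  rewrite Derive_n_comp_opp, Ropp_involutive.
  2: { apply filter_forall; intros; apply f_smooth. }
  replace (- y) with (-1 * y) by ring.
  rewrite Rpow_mult_distr.
  replace ((-1) ^ m * y ^ m / INR (fact m) * ((-1) ^ m * Derive_n f m t))
    with (((-1) * (-1)) ^ m * (y ^ m / INR (fact m) * Derive_n f m t))
    by (rewrite Rpow_mult_distr; unfold Rdiv; ring).
  replace ((-1) * (-1)) with 1 by ring.
  rewrite pow1; ring.
Qed.

Lemma taylor_remainder_bound_pos f n M t y :
  (forall m x, ex_derive_n f m x) ->
  (forall x, Rabs (Derive_n f (S n) x) <= M) -> 0 < y ->
  Rabs (f (y + t) - taylor_poly f n t y) <= M * Rabs y ^ S n / INR (fact (S n)).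
Proof.
  intros f_smooth f_bound Hy.
  destruct (Taylor_Lagrange f n t (y + t)) as [z [_ Hz]];
    [lra | intros; apply f_smooth |].
  replace (y + t - t) with y in Hz by ring.
  unfold taylor_poly; rewrite Hz, (Rabs_pos_eq y) by lra.
  match goal with |- Rabs (?T + ?Rm - ?T) <= _ => replace (T + Rm - T) with Rm by ring end.
  assert (Hc : 0 <= y ^ S n / INR (fact (S n))).
  { apply Rmult_le_pos; [apply pow_le; lra |].
    left; apply Rinv_0_lt_compat, INR_fact_lt_0. }
  rewrite Rabs_mult, (Rabs_pos_eq _ Hc).
  replace (M * y ^ S n / INR (fact (S n))) with (y ^ S n / INR (fact (S n)) * M)
    by (unfold Rdiv; ring).
  apply Rmult_le_compat_l; auto.
Qed.

Lemma taylor_remainder_bound f n M t y :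
  (forall m x, ex_derive_n f m x) ->
  (forall x, Rabs (Derive_n f (S n) x) <= M) ->
  Rabs (f (y + t) - taylor_poly f n t y) <= M * Rabs y ^ S n / INR (fact (S n)).
Proof.
  intros f_smooth f_bound.
  destruct (Rtotal_order y 0) as [Hy|[Hy|Hy]].
  (* [Taylor_Lagrange] only expands to the right of the base point: reflect. *)
  - set (g := fun u => f (- u)).
    assert (g_smooth : forall m x, ex_derive_n g m x).
    { intros m x; apply ex_derive_n_comp_opp, filter_forall; intros; apply f_smooth. }
    assert (g_bound : forall x, Rabs (Derive_n g (S n) x) <= M).
    { intros x; unfold g; rewrite Derive_n_comp_opp.
      - rewrite Rabs_mult, <- RPow_abs, Rabs_m1, pow1, Rmult_1_l; apply f_bound.
      - apply filter_forall; intros; apply f_smooth. }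
    rewrite <- (taylor_poly_opp f n t y f_smooth), <- (Rabs_Ropp y).
    replace (f (y + t)) with (g (- y + - t)) by (unfold g; f_equal; ring).
    fold g; apply taylor_remainder_bound_pos; [exact g_smooth | exact g_bound | lra].
  - subst y; rewrite taylor_poly_0, Rplus_0_l, Rminus_diag, Rabs_R0, pow_i by lia.
    unfold Rdiv; rewrite Rmult_0_r, Rmult_0_l; lra.
  - apply taylor_remainder_bound_pos; [exact f_smooth | exact f_bound | lra].
Qed.

Fixpoint root_prod (r : nat -> R) (n : nat) (z : R) : R :=
  match n with O => 1 | S n => root_prod r n z * (z - r n) end.

Fixpoint root_prod_coef (r : nat -> R) (n j : nat) : R :=
  match n with
  | O => if Nat.eqb j 0 then 1 else 0
  | S n => match j with O => 0 | S i => root_prod_coef r n i end - r n * root_prod_coef r n j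
  end.

Lemma root_prod_coef_high r n j : (n < j)%nat -> root_prod_coef r n j = 0.
Proof.
  revert j; induction n as [|n IHn]; intros [|j] Hj; simpl; try lia; [reflexivity|].
  rewrite !IHn by lia; ring.
Qed.

Lemma root_prod_expand r n z :
  root_prod r n z = sum_f_R0 (fun j => root_prod_coef r n j * z ^ j) n.
Proof.
  induction n as [|n IHn]; [simpl; ring|].
  set (c := root_prod_coef r n).
  assert (c_top : c (S n) = 0) by (apply root_prod_coef_high; lia).
  rewrite (sum_eq _ (fun j => match j with O => 0 | S i => c i end * z ^ j - c j * z ^ j * r n))
    by (intros; simpl; fold c; ring).
  rewrite minus_sum, decomp_sum, tech5 by lia.
  simpl pred; simpl root_prod.
  rewrite IHn, c_top; fold c.
  rewrite (sum_eq (fun i => c i * z ^ S i) (fun i => c i * z ^ i * z)) by (intros; simpl; ring).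
  rewrite <- !scal_sum; ring.
Qed.

Lemma root_prod_eq0 r n z i : (i < n)%nat -> z = r i -> root_prod r n z = 0.
Proof.
  induction n as [|n IHn]; intros Hi Hz; [lia|].
  simpl; destruct (Nat.eq_dec i n) as [->|Hne].
  - rewrite Hz; ring.
  - rewrite IHn by (lia || assumption); ring.
Qed.

Lemma root_prod_neq0 r n z : (forall i, (i < n)%nat -> z <> r i) -> root_prod r n z <> 0.
Proof.
  induction n as [|n IHn]; intros Hz; simpl; [lra|].
  apply Rmult_integral_contrapositive_currified.
  - apply IHn; intros; apply Hz; lia.
  - apply Rminus_eq_contra, Hz; lia.
Qed.

Lemma geometric_moments b n k : 1 < b -> (k <= n)%nat ->
  exists alpha : nat -> R, forall m, (m <= n)%nat ->
    sum_f_R0 (fun j => alpha j * (b ^ j) ^ m) n = if Nat.eqb m k then 1 else 0.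
Proof.
  intros Hb Hk.
  (* [r 0], ..., [r (n - 1)] are the nodes [b ^ 0], ..., [b ^ n] without [b ^ k]. *)
  set (r := fun i => b ^ (if Nat.ltb i k then i else S i)).
  assert (Hnz : root_prod r n (b ^ k) <> 0).
  { apply root_prod_neq0; intros i Hi; unfold r.
    destruct (Nat.ltb_spec i k).
    - apply Rgt_not_eq, Rlt_pow; [lra | lia].
    - apply Rlt_not_eq, Rlt_pow; [lra | lia]. }
  exists (fun j => root_prod_coef r n j / root_prod r n (b ^ k)); intros m Hm.
  rewrite (sum_eq _ (fun j => root_prod_coef r n j * (b ^ m) ^ j * / root_prod r n (b ^ k))).
  2: { intros j _; rewrite <- !pow_mult, Nat.mul_comm; unfold Rdiv; ring. }
  rewrite <- scal_sum, <- root_prod_expand.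
  destruct (Nat.eqb_spec m k) as [->|Hmk]; [field; exact Hnz|].
  rewrite (root_prod_eq0 r n (b ^ m) (if Nat.ltb m k then m else pred m)); [ring| |].
  - destruct (Nat.ltb_spec m k); lia.
  - unfold r; destruct (Nat.ltb_spec m k).
    + destruct (Nat.ltb_spec m k); [reflexivity | lia].
    + destruct (Nat.ltb_spec (pred m) k); [lia | f_equal; lia].
Qed.

Lemma sum_f_R0_switch (u : nat -> nat -> R) n m :
  sum_f_R0 (fun i => sum_f_R0 (u i) m) n = sum_f_R0 (fun j => sum_f_R0 (fun i => u i j) n) m.
Proof.
  induction n as [|n IHn]; [reflexivity|].
  rewrite tech5, IHn, <- plus_sum; reflexivity.
Qed.

Lemma sum_f_R0_kronecker (c : nat -> R) n k : (k <= n)%nat ->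
  sum_f_R0 (fun m => c m * (if Nat.eqb m k then 1 else 0)) n = c k.
Proof.
  induction n as [|n IHn]; intros Hk.
  - replace k with 0%nat by lia; simpl; ring.
  - rewrite tech5; destruct (Nat.eq_dec k (S n)) as [->|Hne].
    + rewrite Nat.eqb_refl, (sum_eq _ (fun _ => 0)), sum_cte; [ring|].
      intros i Hi; replace (Nat.eqb i (S n)) with false; [ring|].
      symmetry; apply Nat.eqb_neq; lia.
    + rewrite IHn by lia; replace (Nat.eqb (S n) k) with false; [ring|].
      symmetry; apply Nat.eqb_neq; lia.
Qed.

Section MomentCombination.

Variables (alpha beta : nat -> R) (p n k : nat).
Hypothesis k_le_n : (k <= n)%nat.
Hypothesis moments : forall m, (m <= n)%nat ->
  sum_f_R0 (fun j => alpha j * beta j ^ m) p = if Nat.eqb m k then 1 else 0.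

Lemma moment_combination_taylor_poly f t x :
  sum_f_R0 (fun j => alpha j * taylor_poly f n t (beta j * x)) p
  = x ^ k / INR (fact k) * Derive_n f k t.
Proof.
  unfold taylor_poly.
  rewrite (sum_eq _ (fun j => sum_f_R0 (fun m =>
    alpha j * beta j ^ m * (x ^ m / INR (fact m) * Derive_n f m t)) n)).
  2: { intros j _; rewrite scal_sum; apply sum_eq; intros m _.
       rewrite Rpow_mult_distr; unfold Rdiv; ring. }
  rewrite sum_f_R0_switch.
  rewrite (sum_eq _ (fun m => x ^ m / INR (fact m) * Derive_n f m t
                              * (if Nat.eqb m k then 1 else 0))).
  - apply sum_f_R0_kronecker, k_le_n.
  - intros m Hm; rewrite <- (moments m Hm), scal_sum; apply sum_eq; intros; ring.
Qed.

Lemma moment_combination_error f M t x :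
  (forall m y, ex_derive_n f m y) ->
  (forall y, Rabs (Derive_n f (S n) y) <= M) ->
  Rabs (sum_f_R0 (fun j => alpha j * f (beta j * x + t)) p
        - x ^ k / INR (fact k) * Derive_n f k t)
  <= M / INR (fact (S n)) * sum_f_R0 (fun j => Rabs (alpha j) * Rabs (beta j) ^ S n) p
     * Rabs x ^ S n.
Proof.
  intros f_smooth f_bound.
  rewrite <- (moment_combination_taylor_poly f t x), <- minus_sum.
  eapply Rle_trans; [apply sum_f_R0_triangle|].
  apply Rle_trans with
    (sum_f_R0 (fun j => Rabs (alpha j) * (M * Rabs (beta j * x) ^ S n / INR (fact (S n)))) p).
  - apply sum_Rle; intros j _.
    rewrite <- Rmult_minus_distr_l, Rabs_mult.
    apply Rmult_le_compat_l; [apply Rabs_pos | apply taylor_remainder_bound; assumption].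
  - apply Req_le.
    rewrite (sum_eq _ (fun j => Rabs (alpha j) * Rabs (beta j) ^ S n
                               * (M / INR (fact (S n)) * Rabs x ^ S n))).
    + rewrite <- scal_sum; ring.
    + intros j _; rewrite Rabs_mult, Rpow_mult_distr; unfold Rdiv; ring.
Qed.

End MomentCombination.

Theorem lemma9 (k : nat) (t : R) (Hk : Derive_n logistic k t <> 0)
  (N : nat) (HN : (k < N)%nat) :
  exists (alpha beta : nat -> R) (c54 : R), 0 <= c54 /\
    forall A x : R, 0 < A -> -A <= x <= A ->
      Rabs (f_net k N t alpha beta x - x ^ k) <= c54 * A ^ N.
Proof.
  destruct N as [|n]; [lia|].
  destruct (geometric_moments 2 n k) as [alpha moments]; [lra | lia |].
  destruct (Derive_n_logistic_solution_bounded logistic logistic_derive logistic_bounded (S n))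
    as [M HM].
  set (K := INR (fact k) / Derive_n logistic k t).
  set (C := M / INR (fact (S n))
            * sum_f_R0 (fun j => Rabs (alpha j) * Rabs (2 ^ j) ^ S n) n).
  assert (HC : 0 <= C).
  { apply Rmult_le_pos.
    - apply Rmult_le_pos; [apply Rle_trans with (2 := HM 0), Rabs_pos |].
      left; apply Rinv_0_lt_compat, INR_fact_lt_0.
    - apply cond_pos_sum; intros j.
      apply Rmult_le_pos; [apply Rabs_pos | apply pow_le, Rabs_pos]. }
  exists alpha, (fun j => 2 ^ j), (Rabs K * C); split.
  - apply Rmult_le_pos; [apply Rabs_pos | exact HC].
  - intros A x HA Hx.
    unfold f_net; fold K; replace (S n - 1)%nat with n by lia.
    replace (K * _ - x ^ k) with
      (K * (sum_f_R0 (fun j => alpha j * logistic (2 ^ j * x + t)) n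
            - x ^ k / INR (fact k) * Derive_n logistic k t))
      by (unfold K; field; split; [exact Hk | apply INR_fact_neq_0]).
    rewrite Rabs_mult, Rmult_assoc; apply Rmult_le_compat_l; [apply Rabs_pos|].
    assert (k_le_n : (k <= n)%nat) by lia.
    eapply Rle_trans.
    + apply (moment_combination_error alpha (fun j => 2 ^ j) n n k k_le_n moments logistic M);
        [apply ex_derive_n_logistic_solution, logistic_derive | exact HM].
    + apply Rmult_le_compat_l; [exact HC|].
      apply pow_incr; split; [apply Rabs_pos | apply Rabs_le; lra].
Qed.
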